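(* Let $F$ be a $4$-regular graph, let $P$ be a circuit partition of $F$, and let $E\subseteq E(F)$ be such that each circuit of $P$ traverses at most one edge of $E$. If $\Gamma$ is a cycle spanning set of $F-E$, then $\Gamma\cup P$ (with the circuits of $P$ given arbitrary orientations) is a cycle spanning set of $F$. If moreover $\Gamma$ is integral, then $\Gamma\cup P$ is an integral cycle spanning set of $F$.
   Context: Graphs: $G=(V,H,E,\epsilon)$ with finite sets of vertices $V$ and half-edges $H$, a partition $E$ of $H$ into unordered pairs (edges), and $\epsilon:H\to V$; loops and multiple edges allowed. For $E'\subseteq E(G)$, $G-E'$ is obtained by deleting the edges of $E'$. A directed version orders each edge as (tail, head). A single transition is an unordered pair of distinct half-edges incident with a common vertex; a directed single transition is such an ordered pair. A closed walk is a sequence $((h_1,h_2),\dots,(h_{n-1},h_n))$ of directed single transitions with $\{h_2,h_3\},\{h_4,h_5\},\dots,\{h_n,h_1\}$ edges, up to cyclic shift. For a directed version $D$ and closed walk $W$, $\sigma(D,W)\in\mathbb Z^{E}$ counts, at each edge $e$, traversals of $e$ along its direction minus traversals against it. A circuit is a nonempty closed walk using each half-edge at most once, with orientation forgotten. The cycle space of $D$ is the right null space over $\mathbb Q$ of its vertex-edge incidence matrix (entry $1$ if $v$ is incident to the tail but not head of $e$, $-1$ if to the head but not tail, $0$ otherwise). A cycle basis of $G$ is a set $B$ of closed walks such that the vectors $\sigma(D,W)$, $W\in B$, are pairwise distinct and form a basis of the cycle space of $D$. A cycle spanning set is a set of closed walks containing a cycle basis. A cycle spanning set $B$ is integral if $\sigma(D,W)$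 lies in the $\mathbb Z$-span of $\{\sigma(D,W'):W'\in B\}$ for every closed walk $W$ of $G$. $F$ is $4$-regular if every vertex is incident with exactly $4$ half-edges. A circuit partition $P$ of $F$ is a set of circuits of $F$ such that every half-edge lies in exactly one single transition of exactly one circuit of $P$. *)

From HB Require Import structures.
From mathcomp Require Import all_boot all_order all_algebra.
Set Implicit Arguments. Unset Strict Implicit. Unset Printing Implicit Defensive.
Import Order.TTheory GRing.Theory Num.Theory.
Local Open Scope ring_scope.

(* A graph G = (V, H, E, eps): finite types V (vertices) and H (half-edges),
   the partition E of H into unordered pairs is encoded by the fixed-point-free
   involution [inv] sending a half-edge to the other half-edge of its edge,
   and [eps : H -> V]. *)
Section Graphs.
Variables (V H : finType) (inv : H -> H) (eps : H -> V).

Definition is_graph := involutive inv /\ (forall h, inv h != h).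

Definition edge_of (h : H) : {set H} := [set h; inv h].
Definition gedges : {set {set H}} := [set edge_of h | h : H].
Definition edge_t := {e : {set H} | e \in gedges}.

Definition four_regular := forall v : V, #|[set h | eps h == v]| = 4%N.

(* directed version: D h = true iff h is the tail half-edge of its edge *)
Definition orientation (D : H -> bool) := forall h, D (inv h) = ~~ D h.

(* closed walk ((a1,b1),...,(ak,bk)) : each (ai,bi) a directed single
   transition, and {b_i, a_(i+1)} (indices cyclic) an edge. *)
Definition dtransition (p : H * H) := (p.1 != p.2) && (eps p.1 == eps p.2).
Definition closed_walk (W : seq (H * H)) :=
  all dtransition W && (map fst (rot 1 W) == map (fun p => inv p.2) W).

Definition halfedges (W : seq (H * H)) : seq H :=
  flatten (map (fun p => [:: p.1; p.2]) W).

(* circuit (with an arbitrary orientation / starting point chosen) *)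
Definition circuit (W : seq (H * H)) :=
  [&& closed_walk W, W != [::] & uniq (halfedges W)].

Definition circuit_partition (P : seq (seq (H * H))) :=
  (forall W, W \in P -> circuit W) /\
  (forall h, count (fun W => h \in halfedges W) P = 1%N).

(* edge e is traversed by W: the traversal from b_i to a_(i+1) = inv b_i *)
Definition traverses (W : seq (H * H)) (e : {set H}) := has (fun p => p.2 \in e) W.

Definition sigma (D : H -> bool) (W : seq (H * H)) : {ffun edge_t -> int} :=
  [ffun e : edge_t => \sum_(p <- W | p.2 \in val e) (if D p.2 then 1 else -1 : int)].

Definition sigmaQ (D : H -> bool) (W : seq (H * H)) : {ffun edge_t -> rat^o} :=
  [ffun e : edge_t => ((sigma D W e)%:~R : rat)].

Definition incidence (D : H -> bool) (v : V) (e : edge_t) : rat :=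
  if [pick h in val e | D h] is Some t then
    let hd := inv t in
    if (eps t == v) && (eps hd != v) then 1
    else if (eps hd == v) && (eps t != v) then -1 else 0
  else 0.

Definition in_cycle_space (D : H -> bool) (x : {ffun edge_t -> rat^o}) :=
  forall v : V, \sum_(e : edge_t) incidence D v e * x e = 0.

Definition cycle_basis_wrt (D : H -> bool) (s : seq (seq (H * H))) :=
  [/\ all closed_walk s, uniq (map (sigmaQ D) s), free (map (sigmaQ D) s)
    & forall x, x \in <<map (sigmaQ D) s>>%VS <-> in_cycle_space D x].

Definition cycle_spanning_wrt (D : H -> bool) (B : seq (H * H) -> Prop) :=
  (forall W, B W -> closed_walk W) /\
  exists s, (forall W, W \in s -> B W) /\ cycle_basis_wrt D s.

Definition integral_wrt (D : H -> bool) (B : seq (H * H) -> Prop) :=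
  forall W, closed_walk W ->
    exists (s : seq (seq (H * H))) (c : nat -> int),
      (forall W', W' \in s -> B W') /\
      sigma D W = \sum_(i < size s) sigma D (nth [::] s i) *~ c i.

Definition cycle_spanning (B : seq (H * H) -> Prop) :=
  forall D, orientation D -> cycle_spanning_wrt D B.

Definition integral_cycle_spanning (B : seq (H * H) -> Prop) :=
  cycle_spanning B /\ forall D, orientation D -> integral_wrt D B.

Definition del_H (E' : {set {set H}}) := {h : H | edge_of h \notin E'}.
Definition del_inv (E' : {set {set H}}) (h : del_H E') : del_H E' :=
  insubd h (inv (val h)).
Definition del_eps (E' : {set {set H}}) (h : del_H E') : V := eps (val h).

Definition lift_walk (E' : {set {set H}}) (W : seq (del_H E' * del_H E')) :
  seq (H * H) := map (fun p => (val p.1, val p.2)) W.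

End Graphs.

Arguments del_H {H} inv E'.
Arguments del_inv {H} inv E' h.
Arguments del_eps {V H} inv eps E' h.
Arguments lift_walk {H} inv E' W.
Arguments cycle_spanning {V H} inv eps B.
Arguments integral_cycle_spanning {V H} inv eps B.
Arguments circuit_partition {V H} inv eps P.
Arguments four_regular {V H} eps.
Arguments is_graph {H} inv.
Arguments gedges {H} inv.
Arguments traverses {H} W e.

From HB Require Import structures.
From mathcomp Require Import all_boot all_order all_algebra.

(* In a closed walk of F, replace each traversal of an edge e of E by the rest of
   the circuit of P through e.  That rest avoids E because the circuit meets E only at e, and
   the change of sigma is +- sigma of the circuit.  The resulting dart cycle lies in F - E;
   cancelling its backtracks turns it into an integer combination of closed walks of F - E,
   hence of Gamma when Gamma is integral.  The circuit through e in E has coordinate +-1 at e and 0 at the other edges of E,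
   so subtracting multiples of these circuits moves a cycle-space vector x of F to one that
   vanishes on E.  Its restriction lies in the cycle space of F - E, which Gamma spans. *)

Set Implicit Arguments. Unset Strict Implicit. Unset Printing Implicit Defensive.
Import Order.TTheory GRing.Theory Num.Theory.
Local Open Scope ring_scope.

Section Edges.
Variables (H : finType) (inv : H -> H).
Hypothesis invK : involutive inv.

Lemma edge_of_gedges h : edge_of inv h \in gedges inv.
Proof. exact: imset_f. Qed.

Definition edgeT (h : H) : edge_t inv := exist _ (edge_of inv h) (edge_of_gedges h).

Lemma gedgesP e : e \in gedges inv -> exists g, e = edge_of inv g.
Proof. by case/imsetP=> g _ ->; exists g. Qed.

Lemma mem_edge_of h : h \in edge_of inv h.
Proof. by rewrite !inE eqxx. Qed.

Lemma edge_of_inv h : edge_of inv (inv h) = edge_of inv h.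
Proof. by rewrite /edge_of invK setUC. Qed.

Lemma mem_gedge_inv e b : e \in gedges inv -> (inv b \in e) = (b \in e).
Proof.
case/gedgesP=> g ->; rewrite !inE.
by rewrite (inv_eq invK) (inj_eq (can_inj invK)) orbC.
Qed.

Lemma mem_gedgeE e b : e \in gedges inv -> (b \in e) = (e == edge_of inv b).
Proof.
case/gedgesP=> g ->; apply/idP/eqP => [|->]; last exact: mem_edge_of.
by rewrite !inE => /orP[] /eqP ->; rewrite ?edge_of_inv.
Qed.

Lemma mem_edgeTE (e : edge_t inv) b : (b \in val e) = (e == edgeT b).
Proof. by case: e => e eG; rewrite (mem_gedgeE _ eG). Qed.

Lemma edge_of_eqP b c : edge_of inv b = edge_of inv c -> b = c \/ b = inv c.
Proof. by move=> ebc; move: (mem_edge_of b); rewrite ebc !inE => /orP[] /eqP; tauto. Qed.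

End Edges.

Section Incidence.
Variables (V H : finType) (inv : H -> H) (eps : H -> V).
Hypothesis invK : involutive inv.

Definition dsign (D : H -> bool) (b : H) : int := if D b then 1 else -1.

Lemma dsign_inv D b : orientation inv D -> dsign D (inv b) = - dsign D b.
Proof. by move=> oD; rewrite /dsign oD; case: (D b). Qed.

Lemma dsign_sqr D b : dsign D b * dsign D b = 1.
Proof. by rewrite /dsign; case: (D b). Qed.

(* [incidence] reads the edge through its tail, i.e. the representative on which [D] holds. *)
Lemma incidence_edge_of D v (e : edge_t inv) g : orientation inv D ->
  val e = edge_of inv g ->
  incidence eps D v e =
    (let t := if D g then g else inv g in
     if (eps t == v) && (eps (inv t) != v) then 1
     else if (eps (inv t) == v) && (eps t != v) then -1 else 0).
Proof.
move=> oD eg; rewrite /incidence eg.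
case: pickP => [t /andP [tg Dt]|noD]; last first.
  by move: (noD g) (noD (inv g)); rewrite mem_edge_of !inE eqxx orbT oD; case: (D g).
suff -> : t = if D g then g else inv g by [].
by move: tg Dt; rewrite !inE => /orP[] /eqP ->; rewrite ?oD; case: (D g).
Qed.

Lemma incidence_edgeT D v b : orientation inv D ->
  incidence eps D v (edgeT inv b) * (dsign D b)%:~R =
  (eps b == v)%:R - (eps (inv b) == v)%:R.
Proof.
move=> oD; rewrite (@incidence_edge_of D v (edgeT inv b) b oD erefl) /dsign /=.
by case: (D b); rewrite ?invK;
  case: (eps b == v); case: (eps (inv b) == v); rewrite /= ?mulr1 ?mulrN1 ?mul0r ?opprK.
Qed.

End Incidence.

Section DartPaths.
Variables (V H : finType) (inv : H -> H) (eps : H -> V).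
Hypothesis invK : involutive inv.

(* A walk as the sequence of its darts: the dart [b] leaves [eps b] and arrives at [eps (inv b)]. *)
Fixpoint dart_path (u : V) (ds : seq H) (w : V) : bool :=
  if ds is b :: ds' then (eps b == u) && dart_path (eps (inv b)) ds' w else u == w.

Lemma dart_path_cat u s1 s2 w :
  dart_path u (s1 ++ s2) w <-> exists m, dart_path u s1 m /\ dart_path m s2 w.
Proof.
elim: s1 u => [|b s1 IH] u /=.
  by split=> [p|[m [/eqP -> //]]]; exists u; rewrite eqxx.
split=> [/andP [eb /IH [m [p1 p2]]]|[m [/andP [eb p1] p2]]]; first by exists m; rewrite eb p1.
by rewrite eb; apply/IH; exists m.
Qed.

Lemma dart_path_catI u m s1 s2 w :
  dart_path u s1 m -> dart_path m s2 w -> dart_path u (s1 ++ s2) w.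
Proof. by move=> p1 p2; apply/dart_path_cat; exists m. Qed.

Lemma dart_path_rev u s w : dart_path u s w -> dart_path w (map inv (rev s)) u.
Proof.
elim: s u => [|b s IH] u /=; first by rewrite eq_sym.
case/andP=> /eqP eb p; rewrite rev_cons -cats1 map_cat.
by apply: (dart_path_catI (IH _ p)); rewrite /= invK eb !eqxx.
Qed.

Lemma dart_path_telescope (v : V) u ds w : dart_path u ds w ->
  \sum_(b <- ds) ((eps b == v)%:R - (eps (inv b) == v)%:R : int) =
  (u == v)%:R - (w == v)%:R.
Proof.
elim: ds u => [|b ds IH] u /=; first by move/eqP->; rewrite big_nil subrr.
by case/andP=> /eqP eb p; rewrite big_cons (IH _ p) eb addrA subrK.
Qed.

Definition dart_cycle (ds : seq H) := ds = [::] \/ exists u, dart_path u ds u.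

Lemma dart_cycle_rot s1 s2 : dart_cycle (s1 ++ s2) -> dart_cycle (s2 ++ s1).
Proof.
case=> [|[u /dart_path_cat [m [p1 p2]]]]; last by right; exists m; apply: dart_path_catI p2 p1.
by case: s1 => // /= ->; left.
Qed.

Definition dsigma (D : H -> bool) (ds : seq H) : {ffun edge_t inv -> int} :=
  [ffun e : edge_t inv => \sum_(b <- ds | b \in val e) dsign D b].

Lemma sigma_dsigma D W : sigma inv D W = dsigma D (map snd W).
Proof. by apply/ffunP=> e; rewrite !ffunE big_map. Qed.

Lemma dsigma_cat D s1 s2 : dsigma D (s1 ++ s2) = dsigma D s1 + dsigma D s2.
Proof. by apply/ffunP=> e; rewrite !ffunE big_cat. Qed.

Lemma dsigma_nil D : dsigma D [::] = 0.
Proof. by apply/ffunP=> e; rewrite !ffunE big_nil. Qed.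

Lemma dsigma_cons D b s : dsigma D (b :: s) = dsigma D [:: b] + dsigma D s.
Proof. by rewrite -dsigma_cat. Qed.

Lemma dsigma_perm D s1 s2 : perm_eq s1 s2 -> dsigma D s1 = dsigma D s2.
Proof. by move=> s12; apply/ffunP=> e; rewrite !ffunE (perm_big _ s12). Qed.

Lemma dsigma_rev D s : orientation inv D -> dsigma D (map inv (rev s)) = - dsigma D s.
Proof.
move=> oD; apply/ffunP=> e; rewrite !ffunE big_map big_rev -sumrN.
by apply: eq_big => [b|b _]; rewrite ?dsign_inv // mem_gedge_inv //; case: e.
Qed.

Lemma dsigma_inv D b : orientation inv D -> dsigma D [:: inv b] = - dsigma D [:: b].
Proof. exact: (dsigma_rev [:: b]). Qed.

Lemma dsigma_backtrack D b : orientation inv D -> dsigma D [:: b; inv b] = 0.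
Proof. by move=> oD; rewrite dsigma_cons dsigma_inv // addrN. Qed.

(* Flow conservation: at every vertex the incidences of a closed dart path telescope to 0. *)
Lemma dart_cycle_in_cycle_space D ds : orientation inv D -> dart_cycle ds ->
  in_cycle_space eps D [ffun e => (dsigma D ds e)%:~R].
Proof.
move=> oD [->|[u cu]] v.
  by rewrite big1 // => e _; rewrite !ffunE big_nil mulr0.
under eq_bigr => e _ do rewrite !ffunE rmorph_sum mulr_sumr big_mkcond /=.
rewrite exchange_big /=.
have /(congr1 (fun z : int => z%:~R : rat)) := dart_path_telescope v cu.
rewrite subrr rmorph_sum rmorph0 => sum0; rewrite -[RHS]sum0; apply: eq_bigr => b _.
rewrite (bigD1 (edgeT inv b)) //= mem_edge_of incidence_edgeT //.
rewrite big1 ?addr0 ?rmorphB /= ?rmorph_nat // => e ne.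
by rewrite mem_edgeTE // ifN.
Qed.

End DartPaths.

Section CycleSpace.
Variables (V H : finType) (inv : H -> H) (eps : H -> V) (D : H -> bool).
Local Notation cycle_space := (@in_cycle_space V H inv eps D).

Lemma cycle_space0 : cycle_space 0.
Proof. by move=> v; apply: big1 => e _; rewrite ffunE mulr0. Qed.

Lemma cycle_spaceD x y : cycle_space x -> cycle_space y -> cycle_space (x + y).
Proof.
move=> cx cy v; under eq_bigr => e _ do rewrite ffunE mulrDr.
by rewrite big_split /= cx cy addr0.
Qed.

Lemma cycle_spaceZ a x : cycle_space x -> cycle_space (a *: x).
Proof.
move=> cx v; under eq_bigr => e _ do rewrite ffunE mulrCA.
by rewrite -mulr_sumr cx mulr0.
Qed.

Lemma cycle_spaceN x : cycle_space x -> cycle_space (- x).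
Proof. by move/(cycle_spaceZ (-1)); rewrite scaleN1r. Qed.

Lemma cycle_space_span (X : seq {ffun edge_t inv -> rat^o}) :
  (forall x, x \in X -> cycle_space x) -> forall y, y \in <<X>>%VS -> cycle_space y.
Proof.
move=> cX y /(coord_span (X := in_tuple X)) ->; apply: (big_ind cycle_space).
- exact: cycle_space0.
- exact: cycle_spaceD.
by move=> i _; apply/cycle_spaceZ/cX/mem_nth.
Qed.

End CycleSpace.

Section WalksAndDarts.
Variables (V H : finType) (inv : H -> H) (eps : H -> V).
Hypothesis invK : involutive inv.

Local Notation dart_path := (dart_path inv eps).
Local Notation dart_cycle := (dart_cycle inv eps).

Fixpoint walk_from (x : H) (ds : seq H) : seq (H * H) :=
  if ds is b :: ds' then (x, b) :: walk_from (inv b) ds' else [::].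

(* The closed walk whose transitions are (inv (previous dart), dart), cyclically. *)
Definition walk_of_darts (ds : seq H) :=
  if ds is b :: ds' then walk_from (inv (last b ds')) ds else [::].

Lemma walk_from_snd x ds : map snd (walk_from x ds) = ds.
Proof. by elim: ds x => //= b ds IH x; rewrite IH. Qed.

Lemma walk_of_darts_snd ds : map snd (walk_of_darts ds) = ds.
Proof. by case: ds => //= b ds; rewrite walk_from_snd. Qed.

Lemma walk_from_fst x ds : map fst (walk_from x ds) = belast x (map inv ds).
Proof. by elim: ds x => //= b ds IH x; rewrite IH. Qed.

Lemma walk_from_at_vertex u x ds w : dart_path u ds w -> eps x = u ->
  all (fun p => eps p.1 == eps p.2) (walk_from x ds).
Proof.
elim: ds u x => //= b ds IH u x /andP [/eqP eb p] ex.
by rewrite ex eb eqxx (IH _ _ p).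
Qed.

Lemma dart_path_last u ds w : dart_path u ds w -> w = last u [seq eps (inv b) | b <- ds].
Proof. by elim: ds u => [|b ds IH] u /=; [move/eqP | case/andP=> _ /IH]. Qed.

Lemma walk_of_darts_rot ds :
  map fst (rot 1 (walk_of_darts ds)) = map (fun p => inv p.2) (walk_of_darts ds).
Proof.
case: ds => //= b ds; rewrite rot1_cons map_rcons walk_from_fst /=.
by rewrite (map_comp inv snd) walk_from_snd -(last_map inv) -lastI.
Qed.

Lemma closed_walk_of_darts ds : dart_cycle ds ->
  all (fun p => p.1 != p.2) (walk_of_darts ds) -> closed_walk inv eps (walk_of_darts ds).
Proof.
case=> [-> //|[u cu]] nondeg; rewrite /closed_walk walk_of_darts_rot eqxx andbT.
apply/allP=> p pW; rewrite /dtransition (allP nondeg p pW) /=.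
case: ds cu pW {nondeg} => // b ds cu pW.
have atW : all (fun p => eps p.1 == eps p.2) (walk_from (inv (last b ds)) (b :: ds)).
  apply: (walk_from_at_vertex cu); case/andP: cu => _ /dart_path_last ->.
  by rewrite (last_map (fun b => eps (inv b))).
exact: (allP atW).
Qed.

Lemma walk_from_degenerate x ds p : p \in walk_from x ds -> p.1 = p.2 ->
  (exists s, ds = x :: s) \/ exists pre c post, ds = pre ++ c :: inv c :: post.
Proof.
elim: ds x => //= b ds IH x; rewrite inE => /orP [/eqP -> /= ->|pW e12].
  by left; exists ds.
right; case: (IH _ pW e12) => [[s ->]|[pre [c [post ->]]]].
  by exists [::], b, s.
by exists (b :: pre), c, post.
Qed.

Lemma walk_dart_path (W : seq (H * H)) x :
  all (fun p => eps p.1 == eps p.2) W ->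
  map fst W = belast x (map (fun p => inv p.2) W) ->
  dart_path (eps x) (map snd W) (eps (last x (map (fun p => inv p.2) W))).
Proof.
elim: W x => [|p W IH] x /=; first by rewrite eqxx.
by case/andP=> /eqP ep atW [e1 eW]; rewrite -ep e1 eqxx (IH _ atW eW).
Qed.

Lemma closed_walk_dart_cycle W : closed_walk inv eps W -> dart_cycle (map snd W).
Proof.
case: W => [|p W]; first by left.
case/andP=> /= /andP [/andP [_ /eqP ep] atW] /eqP; rewrite rot1_cons map_rcons /=.
rewrite (lastI (inv p.2)) => /rcons_inj [eW e1].
right; exists (eps p.2); rewrite /= eqxx -ep e1.
by apply: walk_dart_path eW; apply/sub_all: atW => q /andP [].
Qed.

Lemma halfedges_perm (W : seq (H * H)) :
  perm_eq (halfedges W) (map fst W ++ map snd W).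
Proof.
elim: W => //= p W IH; rewrite /halfedges /= -/(halfedges W) perm_cons.
by rewrite perm_sym -cat1s perm_catCA /= perm_cons perm_sym.
Qed.

Lemma closed_walk_fst W : closed_walk inv eps W ->
  perm_eq (map fst W) (map inv (map snd W)).
Proof.
case/andP=> _ /eqP eW; rewrite -map_comp.
by rewrite -(perm_rot 1) -map_rot eW.
Qed.

Lemma circuit_uniq C : circuit inv eps C -> uniq (map snd C).
Proof. by case/and3P=> _ _; rewrite (perm_uniq (halfedges_perm C)) cat_uniq => /and3P []. Qed.

Lemma circuit_dart_inv C b : circuit inv eps C ->
  b \in map snd C -> inv b \notin map snd C.
Proof.
case/and3P=> cC _; rewrite (perm_uniq (halfedges_perm C)) cat_uniq => /and3P [_ /hasPn disj _] bC.
apply/negP => /disj; rewrite /= (perm_mem (closed_walk_fst cC)).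
by rewrite (mem_map (can_inj invK)) bC.
Qed.

Lemma circuit_halfedgeP C b : circuit inv eps C -> b \in halfedges C ->
  b \in map snd C \/ inv b \in map snd C.
Proof.
case/and3P=> cC _ _; rewrite (perm_mem (halfedges_perm C)) mem_cat.
case/orP=> [|bC]; last by left.
by rewrite (perm_mem (closed_walk_fst cC)) => /mapP [c cC' ->]; right; rewrite invK.
Qed.

Lemma closed_walk_in_cycle_space D W : orientation inv D -> closed_walk inv eps W ->
  in_cycle_space eps D (sigmaQ inv D W).
Proof.
move=> oD /closed_walk_dart_cycle /(dart_cycle_in_cycle_space invK oD).
by rewrite /sigmaQ sigma_dsigma.
Qed.

End WalksAndDarts.

Section IntSpan.
Variables (V H : finType) (inv : H -> H) (eps : H -> V) (D : H -> bool).

Definition int_span (B : seq (H * H) -> Prop) (v : {ffun edge_t inv -> int}) :=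
  exists l : seq (seq (H * H) * int),
    (forall p, p \in l -> B p.1) /\ v = \sum_(p <- l) sigma inv D p.1 *~ p.2.

Implicit Types B : seq (H * H) -> Prop.

Lemma int_span0 B : int_span B 0.
Proof. by exists [::]; rewrite big_nil. Qed.

Lemma int_span_sigma B W : B W -> int_span B (sigma inv D W).
Proof.
move=> BW; exists [:: (W, 1)]; split; last by rewrite big_seq1.
by move=> p; rewrite inE => /eqP ->.
Qed.

Lemma int_spanD B v1 v2 : int_span B v1 -> int_span B v2 -> int_span B (v1 + v2).
Proof.
move=> [l1 [B1 ->]] [l2 [B2 ->]]; exists (l1 ++ l2); split; last by rewrite big_cat.
by move=> p; rewrite mem_cat => /orP [/B1|/B2].
Qed.

Lemma int_spanMz B v k : int_span B v -> int_span B (v *~ k).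
Proof.
move=> [l [Bl ->]]; exists [seq (p.1, p.2 * k) | p <- l]; split.
  by move=> q /mapP [p pl ->]; exact: Bl pl.
by rewrite big_map mulrz_suml; apply: eq_bigr => p _; rewrite mulrzA.
Qed.

Lemma int_spanN B v : int_span B v -> int_span B (- v).
Proof. by move/(int_spanMz (-1)); rewrite mulrNz mulr1z. Qed.

Lemma int_span_sub B B' v :
  (forall W, B W -> B' W) -> int_span B v -> int_span B' v.
Proof. by move=> BB' [l [Bl ev]]; exists l; split => // p /Bl /BB'. Qed.

Lemma int_span_trans B B' v :
  (forall W, B W -> int_span B' (sigma inv D W)) -> int_span B v -> int_span B' v.
Proof.
move=> BB' [l [Bl ->]]; elim: l Bl => [|p l IH] Bl; first by rewrite big_nil; apply: int_span0.
rewrite big_cons; apply: int_spanD; last by apply: IH => q ql; apply: Bl; rewrite inE ql orbT.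
by apply/int_spanMz/BB'/Bl/mem_head.
Qed.

Lemma integral_wrtP B : integral_wrt inv eps D B <->
  forall W, closed_walk inv eps W -> int_span B (sigma inv D W).
Proof.
split=> intB W /intB.
  case=> s [c [Bs ->]]; exists [seq (nth [::] s i, c i) | i <- iota 0 (size s)]; split.
    by move=> q /mapP [i]; rewrite mem_iota => /andP [_ ilt] ->; apply/Bs/mem_nth.
  have -> : iota 0 (size s) = index_iota 0 (size s) by rewrite /index_iota subn0.
  by rewrite big_map big_mkord.
case=> l [Bl ->]; exists (map fst l), (fun i => nth 0 (map snd l) i); split.
  by move=> q /mapP [p pl ->]; exact: Bl pl.
rewrite size_map (big_nth ([::], 0)) big_mkord; apply: eq_bigr => i _.
by rewrite !(nth_map ([::], 0)).
Qed.

End IntSpan.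

Arguments int_span {H} inv D B v.

Section Backtracks.
Variables (V H : finType) (inv : H -> H) (eps : H -> V).
Hypotheses (invK : involutive inv) (inv_neq : forall h, inv h != h).

Local Notation dart_cycle := (dart_cycle inv eps).
Local Notation dsigma := (dsigma inv).

(* A degenerate transition of [walk_of_darts ds] is a backtrack [c; inv c] of [ds],
   read cyclically. *)
Lemma dart_cycle_shorten ds : dart_cycle ds ->
  ~~ all (fun p => p.1 != p.2) (walk_of_darts inv ds) ->
  exists ds', [/\ dart_cycle ds', (size ds' < size ds)%N, {subset ds' <= ds}
    & forall D, orientation inv D -> dsigma D ds' = dsigma D ds].
Proof.
rewrite -has_predC => cds /hasP [p pW /negPn /eqP e12].
case: ds cds pW => [//|b ds] cds /walk_from_degenerate /(_ e12).
case=> [[s [eb _]]|[pre [c [post eds]]]].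
  case/lastP: ds eb cds => [/= eb|s' z]; first by move: (inv_neq b); rewrite -eb eqxx.
  rewrite last_rcons => -> cds; exists s'; split.
  - case: cds => [//|[u /= /andP [_]]].
    rewrite invK -cats1 => /dart_path_cat [m [ps' /= /andP [/eqP ezm _]]].
    by right; exists m; rewrite -{1}ezm.
  - by rewrite /= size_rcons.
  - by move=> d ds'; rewrite inE mem_rcons inE ds' !orbT.
  move=> D oD; rewrite dsigma_cons -cats1 dsigma_cat dsigma_inv //.
  by rewrite [_ + dsigma D [:: z]]addrC addKr.
move: cds; rewrite eds => cds; exists (pre ++ post); split.
- case: cds => [|[u /dart_path_cat [m [ppre /= /andP [/eqP ec /andP [_ ppost]]]]]].
    by case: pre {eds}.
  by rewrite invK ec in ppost; right; exists u; apply: dart_path_catI ppost.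
- by rewrite !size_cat ltn_add2l /= ltnS leqnSn.
- by move=> d; rewrite !mem_cat !inE => /orP [] ->; rewrite ?orbT.
move=> D oD; rewrite -[c :: _]/([:: c; inv c] ++ post).
by rewrite !dsigma_cat dsigma_backtrack // add0r.
Qed.

Lemma dart_cycle_int_span (S : pred H) D ds : orientation inv D ->
  (forall d, S (inv d) = S d) -> dart_cycle ds -> all S ds ->
  int_span inv D (fun W => closed_walk inv eps W /\ forall p, p \in W -> S p.1 && S p.2)
    (dsigma D ds).
Proof.
move=> oD Sinv; have [n] := ubnP (size ds); elim: n ds => // n IH ds /ltnSE szn cds Sds.
have [nondeg|deg] := boolP (all (fun p => p.1 != p.2) (walk_of_darts inv ds)); last first.
  have [ds' [cds' sz' sub' <- //]] := dart_cycle_shorten cds deg.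
  apply: IH cds' _; first exact: leq_trans sz' szn.
  by apply/allP => d /sub' /(allP Sds).
have cW := closed_walk_of_darts cds nondeg.
rewrite -(walk_of_darts_snd inv ds) -sigma_dsigma; apply: int_span_sigma; split => // p pW.
have Sp2 : S p.2 by apply: (allP Sds); rewrite -(walk_of_darts_snd inv ds) map_f.
have : p.1 \in map inv ds.
  by rewrite -(walk_of_darts_snd inv ds) -(perm_mem (closed_walk_fst cW)) map_f.
by case/mapP=> d dds ->; rewrite Sinv (allP Sds d dds) Sp2.
Qed.

End Backtracks.

Section Deletion.
Variables (V H : finType) (inv : H -> H) (eps : H -> V) (E : {set {set H}}).
Hypothesis invK : involutive inv.

Local Notation dH := (del_H inv E).
Local Notation dinv := (del_inv inv E).
Local Notation deps := (del_eps inv eps E).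

Lemma val_del_inv (h : dH) : val (dinv h) = inv (val h).
Proof.
have invE : edge_of inv (inv (val h)) \notin E by rewrite edge_of_inv //; exact: (valP h).
by rewrite /del_inv insubdK.
Qed.

Lemma closed_lift_walk W' :
  closed_walk inv eps (lift_walk inv E W') = closed_walk dinv deps W'.
Proof.
rewrite /closed_walk /lift_walk all_map -map_rot -!map_comp.
congr andb.
rewrite -(inj_eq (inj_map val_inj)) -!map_comp.
by congr (_ == _); apply: eq_map => p //=; rewrite val_del_inv.
Qed.

Definition del_orientation (D : H -> bool) : dH -> bool := fun h => D (val h).

Lemma orientation_del D : orientation inv D -> orientation dinv (del_orientation D).
Proof. by move=> oD h; rewrite /del_orientation val_del_inv oD. Qed.

Lemma lift_edge_subproof (e' : edge_t dinv) : [set val x | x in val e'] \in gedges inv.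
Proof.
case: e' => _ /= /gedgesP [g' ->].
by rewrite /edge_of imsetU1 imset_set1 val_del_inv; apply: edge_of_gedges.
Qed.

Definition lift_edge (e' : edge_t dinv) : edge_t inv :=
  exist (fun e => e \in gedges inv) _ (lift_edge_subproof e').

Lemma val_lift_edge (e' : edge_t dinv) g' : val e' = edge_of dinv g' ->
  val (lift_edge e') = edge_of inv (val g').
Proof. by move=> /= ->; rewrite /edge_of imsetU1 imset_set1 val_del_inv. Qed.

Lemma lift_edge_notin e' : val (lift_edge e') \notin E.
Proof. by have [g' /val_lift_edge ->] := gedgesP (valP e'); apply: (valP g'). Qed.

Lemma lift_edge_inj : injective lift_edge.
Proof. by move=> e1 e2 /(congr1 val) /(imset_inj val_inj) /val_inj. Qed.

Lemma lift_edge_onto (e : edge_t inv) : val e \notin E -> exists e', lift_edge e' = e.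
Proof.
have [g eg] := gedgesP (valP e); rewrite eg => gE.
exists (edgeT dinv (Sub g gE : dH)); apply: val_inj.
by rewrite (val_lift_edge (g' := Sub g gE)) -?eg.
Qed.

(* A vector on the edges of [F - E], extended by zero to the edges of [E]. *)
Definition lift_vec (R : zmodType) (x : {ffun edge_t dinv -> R}) : {ffun edge_t inv -> R} :=
  [ffun e => \sum_(e' | lift_edge e' == e) x e'].

Lemma lift_vecE (R : zmodType) (x : {ffun edge_t dinv -> R}) e' : lift_vec x (lift_edge e') = x e'.
Proof.
by rewrite ffunE (eq_bigl _ _ (fun e'' => inj_eq lift_edge_inj e'' e')) big_pred1_eq.
Qed.

Lemma lift_vec_E (R : zmodType) (x : {ffun edge_t dinv -> R}) e : val e \in E -> lift_vec x e = 0.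
Proof.
move=> eE; rewrite ffunE big_pred0 // => e'; apply: contraTF eE => /eqP <-.
exact: lift_edge_notin.
Qed.

Lemma lift_vec_is_zmod_morphism (R : zmodType) : zmod_morphism (@lift_vec R).
Proof.
move=> x y; apply/ffunP=> e; rewrite !ffunE -sumrB.
by apply: eq_bigr => e' _; rewrite !ffunE.
Qed.

HB.instance Definition _ (R : zmodType) :=
  GRing.isZmodMorphism.Build _ _ (@lift_vec R) (@lift_vec_is_zmod_morphism R).

Lemma lift_vec_is_scalable (K : pzRingType) (R : lmodType K) : scalable (@lift_vec R).
Proof.
move=> a x; apply/ffunP=> e; rewrite !ffunE scaler_sumr.
by apply: eq_bigr => e' _; rewrite !ffunE.
Qed.

HB.instance Definition _ (K : pzRingType) (R : lmodType K) :=
  GRing.isScalable.Build K _ _ *:%R (@lift_vec R) (@lift_vec_is_scalable K R).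

Lemma lift_vec_eq (R : zmodType) (x : {ffun edge_t dinv -> R}) (y : {ffun edge_t inv -> R}) :
  (forall e, val e \in E -> y e = 0) -> (forall e', x e' = y (lift_edge e')) -> lift_vec x = y.
Proof.
move=> yE xy; apply/ffunP=> e; have [eE|/lift_edge_onto [e' <-]] := boolP (val e \in E).
  by rewrite lift_vec_E ?yE.
by rewrite lift_vecE.
Qed.

Lemma lift_vec_span (X : seq {ffun edge_t dinv -> rat^o}) x :
  x \in <<X>>%VS -> lift_vec x \in <<map (@lift_vec rat^o) X>>%VS.
Proof.
move/(memv_img (linfun (@lift_vec rat^o))).
by rewrite limg_span lfunE (eq_map (lfunE _)).
Qed.

Lemma sigma_lift_walk D W' :
  sigma inv D (lift_walk inv E W') = lift_vec (sigma dinv (del_orientation D) W').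
Proof.
symmetry; apply: lift_vec_eq => [e eE|e']; rewrite !ffunE /lift_walk big_map.
  apply: big_pred0 => p /=; apply: contraTF eE; rewrite (mem_gedgeE invK _ (valP e)) => /eqP ->.
  exact: (valP p.2).
by apply: eq_bigl => p /=; rewrite (mem_imset _ _ val_inj).
Qed.

Lemma sigmaQ_lift_walk D W' :
  sigmaQ inv D (lift_walk inv E W') = lift_vec (sigmaQ dinv (del_orientation D) W').
Proof.
apply/ffunP=> e; rewrite [LHS]ffunE sigma_lift_walk !ffunE rmorph_sum.
by apply: eq_bigr => e' _; rewrite [RHS]ffunE.
Qed.

Lemma sum_lift_vec (F : edge_t inv -> rat) (x : {ffun edge_t dinv -> rat^o}) :
  \sum_e F e * lift_vec x e = \sum_e' F (lift_edge e') * x e'.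
Proof.
rewrite [RHS](partition_big lift_edge xpredT) //=; apply: eq_bigr => e _.
by rewrite ffunE mulr_sumr; apply: eq_bigr => e' /eqP <-.
Qed.

Lemma incidence_lift_edge D v e' : orientation inv D ->
  incidence deps (del_orientation D) v e' = incidence eps D v (lift_edge e').
Proof.
move=> oD; have [g' eg] := gedgesP (valP e').
rewrite (incidence_edge_of _ _ (orientation_del oD) eg).
rewrite (incidence_edge_of _ _ oD (val_lift_edge eg)).
by rewrite /del_orientation /del_eps; case: (D (val g')); rewrite /= ?val_del_inv.
Qed.

Definition restr_vec (y : {ffun edge_t inv -> rat^o}) : {ffun edge_t dinv -> rat^o} :=
  [ffun e' => y (lift_edge e')].

Lemma restr_cycle_space D y : orientation inv D -> in_cycle_space eps D y ->
  (forall e, val e \in E -> y e = 0) -> in_cycle_space deps (del_orientation D) (restr_vec y).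
Proof.
move=> oD cy yE v.
have yL : lift_vec (restr_vec y) = y by apply: lift_vec_eq => // e'; rewrite ffunE.
rewrite -[RHS](cy v) -[in RHS]yL sum_lift_vec.
by apply: eq_bigr => e' _; rewrite incidence_lift_edge.
Qed.

Lemma lift_walk_onto (W : seq (H * H)) :
  (forall p, p \in W -> (edge_of inv p.1 \notin E) && (edge_of inv p.2 \notin E)) ->
  exists W', lift_walk inv E W' = W.
Proof.
elim: W => [|[a b] W IH] WE; first by exists [::].
have [|W' <-] := IH; first by move=> q qW; apply: WE; rewrite inE qW orbT.
have /andP [aE bE] := WE _ (mem_head _ _).
by exists ((Sub a aE : dH, Sub b bE : dH) :: W').
Qed.

End Deletion.

Lemma span_free_mask (K : fieldType) (vT : vectType K) (X : seq vT) :
  exists m : bitseq, free (mask m X) /\ (<<mask m X>> = <<X>>)%VS.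
Proof.
elim: X => [|x X [m [free_m span_m]]]; first by exists [::]; rewrite nil_free.
have [xX|xNX] := boolP (x \in <<mask m X>>%VS).
  exists (false :: m); split => //=; rewrite span_cons span_m.
  by apply/eqP; rewrite eqEsubv addvSr subv_add subvv andbT -memvE -span_m.
by exists (true :: m); rewrite /= free_cons xNX free_m !span_cons span_m.
Qed.

Section LiftUnion.
Variables (V H : finType) (inv : H -> H) (eps : H -> V) (E : {set {set H}})
  (P : seq (seq (H * H))).
Hypotheses (invK : involutive inv) (inv_neq : forall h, inv h != h).
Hypothesis partP : circuit_partition inv eps P.
Hypothesis P_E : forall W, W \in P -> (#|[set e in E | traverses W e]| <= 1)%N.

Local Notation dH := (del_H inv E).
Local Notation dinv := (del_inv inv E).
Local Notation deps := (del_eps inv eps E).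
Local Notation dart_path := (dart_path inv eps).
Local Notation dsigma := (dsigma inv).

Definition off_E (d : H) := edge_of inv d \notin E.

Definition lift_union (Gam : seq (dH * dH) -> Prop) (W : seq (H * H)) :=
  (exists W', Gam W' /\ W = lift_walk inv E W') \/ W \in P.

Lemma circuitP C : C \in P -> circuit inv eps C.
Proof. exact: partP.1. Qed.

Definition circuit_at (b : H) := nth [::] P (find (fun W => b \in halfedges W) P).

Lemma circuit_atP b : circuit_at b \in P /\ b \in halfedges (circuit_at b).
Proof.
have bP : has (fun W => b \in halfedges W) P by rewrite has_count partP.2.
by split; [apply: mem_nth; rewrite -has_find | exact: nth_find _ bP].
Qed.

Lemma traverses_dart C d : d \in map snd C -> traverses C (edge_of inv d).
Proof. by case/mapP=> p pC ->; apply/hasP; exists p => //; apply: mem_edge_of. Qed.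

Lemma circuit_E_edge_uniq C d1 d2 : C \in P -> d1 \in map snd C -> d2 \in map snd C ->
  edge_of inv d1 \in E -> edge_of inv d2 \in E -> edge_of inv d1 = edge_of inv d2.
Proof.
move=> CP d1C d2C d1E d2E.
by apply: (card_le1_eqP (P_E CP)); rewrite inE ?d1E ?d2E traverses_dart.
Qed.

(* Since [C] meets [E] only in the edge of [b], the rest of [C] stays in [F - E]. *)
Lemma circuit_split_E C b : C \in P -> b \in map snd C -> edge_of inv b \in E ->
  exists rest, [/\ perm_eq (map snd C) (b :: rest),
    dart_path (eps (inv b)) rest (eps b) & all off_E rest].
Proof.
move=> CP bC bE; have cC := circuitP CP.
have [p1 [p2 eC]] : exists p1 p2, map snd C = p1 ++ b :: p2.
  by case/splitPr: bC => p1 p2; exists p1, p2.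
have pC : perm_eq (map snd C) (b :: p2 ++ p1) by rewrite eC perm_catC.
exists (p2 ++ p1); split => //.
  have /and3P [/closed_walk_dart_cycle] := cC; rewrite eC.
  by case/dart_cycle_rot => [//|[u /= /andP [/eqP -> pth]]].
apply/allP => d drest; apply/negP => dE; have dC : d \in map snd C.
  by rewrite (perm_mem pC) inE drest orbT.
have [ed|ed] := edge_of_eqP (circuit_E_edge_uniq CP dC bC dE bE); subst d.
  by move: (circuit_uniq cC); rewrite (perm_uniq pC) /= drest.
by move: (circuit_dart_inv invK cC bC); rewrite dC.
Qed.

Lemma dart_detour D b : orientation inv D -> edge_of inv b \in E ->
  exists R, [/\ dart_path (eps b) R (eps (inv b)), all off_E R
    & int_span inv D (fun W => W \in P) (dsigma D [:: b] - dsigma D R)].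
Proof.
move=> oD bE; have [CP bC] := circuit_atP b; set C := circuit_at b in CP bC.
have cC := circuitP CP.
have spanC : int_span inv D (fun W => W \in P) (dsigma D (map snd C)).
  by rewrite -sigma_dsigma; apply: int_span_sigma.
have [bC'|ibC] := circuit_halfedgeP invK cC bC.
  have [rest [pC pth off]] := circuit_split_E CP bC' bE.
  exists (map inv (rev rest)); split; first exact: dart_path_rev.
    apply/allP => x /mapP [d]; rewrite mem_rev => drest ->.
    by rewrite /off_E edge_of_inv //; apply: (allP off).
  by rewrite dsigma_rev // opprK -dsigma_cons -(dsigma_perm inv D pC).
have ibE : edge_of inv (inv b) \in E by rewrite edge_of_inv.
have [rest [pC pth off]] := circuit_split_E CP ibC ibE.
exists rest; split => //; first by rewrite invK in pth.
rewrite -[dsigma D [:: b]]opprK -dsigma_inv // -opprD -dsigma_cons -(dsigma_perm inv D pC).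
exact: int_spanN.
Qed.

Lemma dart_path_avoid_E D u ds w : orientation inv D -> dart_path u ds w ->
  exists ds', [/\ dart_path u ds' w, all off_E ds'
    & int_span inv D (fun W => W \in P) (dsigma D ds - dsigma D ds')].
Proof.
move=> oD; elim: ds u => [|b ds IH] u /= pth.
  by exists [::]; split; rewrite ?subrr //; apply: int_span0.
case/andP: pth => /eqP ebu /IH [ds' [pth' off' span']].
have [bE|boff] := boolP (edge_of inv b \in E).
  have [R [pR offR spanR]] := dart_detour oD bE.
  exists (R ++ ds'); split; first by rewrite -ebu; apply: dart_path_catI pR pth'.
    by rewrite all_cat offR.
  by rewrite dsigma_cons dsigma_cat opprD addrACA; apply: int_spanD.
exists (b :: ds'); split; first by rewrite /= ebu eqxx.
  exact/andP.
by rewrite (dsigma_cons inv D b ds) (dsigma_cons inv D b ds') opprD addrACA subrr add0r.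
Qed.

Lemma int_span_lift D Gam x : int_span dinv (del_orientation D) Gam x ->
  int_span inv D (lift_union Gam) (lift_vec invK x).
Proof.
case=> l [Gl ->]; rewrite raddf_sum.
exists [seq (lift_walk inv E p.1, p.2) | p <- l]; split.
  by move=> q /mapP [p pl ->]; left; exists p.1; split => //; apply: Gl.
by rewrite big_map; apply: eq_bigr => p _; rewrite raddfMz (sigma_lift_walk invK).
Qed.

Lemma integral_lift_union D Gam : orientation inv D ->
  integral_wrt dinv deps (del_orientation D) Gam -> integral_wrt inv eps D (lift_union Gam).
Proof.
move=> oD /integral_wrtP intG; apply/integral_wrtP => W cW; rewrite sigma_dsigma.
case: (closed_walk_dart_cycle cW) => [->|[u pth]]; first by rewrite dsigma_nil; apply: int_span0.
have [ds [pds offds spanP]] := dart_path_avoid_E oD pth.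
rewrite -(subrK (dsigma D ds) (dsigma D _)); apply: int_spanD.
  by apply: int_span_sub spanP => C CP; right.
have off_inv d : off_E (inv d) = off_E d by rewrite /off_E edge_of_inv.
have := dart_cycle_int_span invK inv_neq oD off_inv (or_intror (ex_intro _ u pds)) offds.
apply: int_span_trans => W' [cW' offW']; have [W'' eW''] := lift_walk_onto offW'.
rewrite -eW'' (sigma_lift_walk invK); apply/int_span_lift/intG.
by rewrite -(closed_lift_walk eps invK) eW''.
Qed.

Definition circuit_through (e : edge_t inv) :=
  nth [::] P (find (fun W => traverses W (val e)) P).

Lemma circuit_throughP e : val e \in E -> circuit_through e \in P /\
  exists2 d, d \in map snd (circuit_through e) & val e = edge_of inv d.
Proof.
move=> eE; have [g eg] := gedgesP (valP e).
have eP : has (fun W => traverses W (val e)) P.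
  have [CP gC] := circuit_atP g; apply/hasP; exists (circuit_at g) => //.
  rewrite eg; case: (circuit_halfedgeP invK (circuitP CP) gC); first exact: traverses_dart.
  by rewrite -(edge_of_inv invK); apply: traverses_dart.
split; first by apply: mem_nth; rewrite -has_find.
have /hasP [p pC pe] := nth_find [::] eP.
by exists p.2; [apply: map_f | apply/eqP; rewrite -(mem_gedgeE invK _ (valP e))].
Qed.

(* [circuit_through e] crosses [E] only at [e], and exactly once. *)
Lemma sigma_circuit_through D e e0 : val e \in E -> val e0 \in E ->
  sigma inv D (circuit_through e) e * sigma inv D (circuit_through e) e0 = (e0 == e)%:R.
Proof.
move=> eE e0E; have [CP [d dC ed]] := circuit_throughP eE.
set C := circuit_through e in CP dC *; have cC := circuitP CP.
have [->|ne] := eqVneq e0 e; last first.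
  suff -> : sigma inv D C e0 = 0 by rewrite mulr0.
  rewrite sigma_dsigma ffunE big1_seq // => b /andP [be0 bC].
  have eb : val e0 = edge_of inv b by apply/eqP; rewrite -(mem_gedgeE invK _ (valP e0)).
  have := circuit_E_edge_uniq CP bC dC; rewrite -eb -ed => /(_ e0E eE) /val_inj e0e.
  by move: ne; rewrite e0e eqxx.
suff -> : sigma inv D C e = dsign D d by rewrite dsign_sqr.
rewrite sigma_dsigma ffunE -big_filter.
suff -> : [seq b <- map snd C | b \in val e] = [:: d] by rewrite big_seq1.
rewrite -(filter_pred1_uniq (circuit_uniq cC) dC); apply: eq_in_filter => b bC.
rewrite ed !inE; case: (eqVneq b (inv d)) => [bd|]; last by rewrite orbF.
by move: (circuit_dart_inv invK cC dC); rewrite -bd bC.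
Qed.

(* The coefficient works because [sigma (circuit_through e) e = +-1] is its own inverse. *)
Definition clear_E D (x : {ffun edge_t inv -> rat^o}) : {ffun edge_t inv -> rat^o} :=
  x - \sum_(e | val e \in E)
        (x e * (sigma inv D (circuit_through e) e)%:~R) *: sigmaQ inv D (circuit_through e).

Lemma clear_E_E D x e0 : val e0 \in E -> clear_E D x e0 = 0.
Proof.
move=> e0E; rewrite /clear_E !ffunE sum_ffunE.
rewrite (eq_bigr (fun e => x e * (e0 == e)%:R)) => [|e eE]; last first.
  rewrite ffunE [sigmaQ _ _ _ _]ffunE -[LHS]/(_ * _ * _ : rat).
  by rewrite -mulrA -intrM sigma_circuit_through // rmorph_nat.
rewrite (bigD1 e0) //= eqxx mulr1 big1 ?addr0 ?subrr // => e /andP [_ ne].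
by rewrite eq_sym (negPf ne) mulr0.
Qed.

Lemma clear_E_cycle_space D x : orientation inv D -> in_cycle_space eps D x ->
  in_cycle_space eps D (clear_E D x).
Proof.
move=> oD cx; apply/(cycle_spaceD cx)/cycle_spaceN.
apply: (big_ind (in_cycle_space eps D)); [exact: cycle_space0 | exact: cycle_spaceD |].
move=> e /circuit_throughP [/circuitP /and3P [cC _ _] _].
exact/cycle_spaceZ/(closed_walk_in_cycle_space invK oD).
Qed.

Definition lift_union_seq (s' : seq (seq (dH * dH))) :=
  map (lift_walk inv E) s' ++ map circuit_through (enum (fun e : edge_t inv => val e \in E)).

Lemma lift_union_seq_closed s' : all (closed_walk dinv deps) s' ->
  forall W, W \in lift_union_seq s' -> closed_walk inv eps W.
Proof.
move=> cs' W; rewrite mem_cat => /orP [/mapP [W' W's' ->]|/mapP [e]].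
  by rewrite (closed_lift_walk eps invK) (allP cs').
by rewrite mem_enum => /circuit_throughP [/circuitP /and3P [] ? _ _ _] ->.
Qed.

Lemma span_lift_union D s' : orientation inv D ->
  cycle_basis_wrt dinv deps (del_orientation D) s' ->
  forall x, x \in <<map (sigmaQ inv D) (lift_union_seq s')>>%VS <-> in_cycle_space eps D x.
Proof.
move=> oD [cs' _ _ span'] x; split.
  apply: cycle_space_span => _ /mapP [W WX ->].
  exact/(closed_walk_in_cycle_space invK oD)/(lift_union_seq_closed cs').
move=> cx; rewrite -(subrK (clear_E D x) x); apply: memvD.
  rewrite /clear_E opprB addrC subrK; apply: memv_suml => e eE.
  by apply/memvZ/memv_span/map_f; rewrite mem_cat map_f ?orbT ?mem_enum.
have <- : lift_vec invK (restr_vec E invK (clear_E D x)) = clear_E D x.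
  by apply: lift_vec_eq => [e0|e']; [apply: clear_E_E | rewrite ffunE].
have := restr_cycle_space invK oD (clear_E_cycle_space oD cx) (clear_E_E D x).
move/span'/(lift_vec_span invK); apply/subvP/sub_span => _ /mapP [_ /mapP [W' W's' ->] ->].
by rewrite -(sigmaQ_lift_walk invK) map_f // mem_cat map_f.
Qed.

Lemma cycle_spanning_lift_union Gam :
  cycle_spanning dinv deps Gam -> cycle_spanning inv eps (lift_union Gam).
Proof.
move=> spanG D oD; have [closedG [s' [s'G basis_s']]] := spanG _ (orientation_del invK oD).
have [cs' _ _ _] := basis_s'.
split=> [W [[W' [GW' ->]]|/circuitP /and3P []//]|].
  by rewrite (closed_lift_walk eps invK); apply: closedG.
have [m [free_m span_m]] := span_free_mask (map (sigmaQ inv D) (lift_union_seq s')).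
exists (mask m (lift_union_seq s')); split.
  move=> W /mem_mask; rewrite mem_cat => /orP [/mapP [W' W's' ->]|/mapP [e]].
    by left; exists W'; split => //; apply: s'G.
  by rewrite mem_enum => /circuit_throughP [CP _] ->; right.
rewrite /cycle_basis_wrt map_mask; split => //.
- by apply/allP => W /mem_mask; apply: lift_union_seq_closed.
- exact: free_uniq.
by move=> x; rewrite span_m; apply: span_lift_union.
Qed.

End LiftUnion.

Theorem mainTheorem6 (V H : finType) (inv : H -> H) (eps : H -> V)
  (E : {set {set H}}) (P : seq (seq (H * H)))
  (Gam : seq (del_H inv E * del_H inv E) -> Prop) :
  is_graph inv ->
  four_regular eps ->
  E \subset gedges inv ->
  circuit_partition inv eps P ->
  (forall W, W \in P -> (#|[set e in E | traverses W e]| <= 1)%N) ->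
  let GamP := fun W : seq (H * H) =>
    (exists W', Gam W' /\ W = lift_walk inv E W') \/ W \in P in
  (cycle_spanning (del_inv inv E) (del_eps inv eps E) Gam ->
     cycle_spanning inv eps GamP) /\
  (integral_cycle_spanning (del_inv inv E) (del_eps inv eps E) Gam ->
     integral_cycle_spanning inv eps GamP).
Proof.
move=> [invK inv_neq] _ _ partP P_E GamP.
have spanning := cycle_spanning_lift_union invK partP P_E (Gam := Gam).
split=> // [[/spanning spanGP intG]]; split=> // D oD.
exact: (integral_lift_union invK inv_neq partP P_E oD (intG _ (orientation_del invK oD))).
Qed.
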